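(* Let $F=\begin{pmatrix}1&0&-1\\0&0&0\\-1&0&1\end{pmatrix}$ (edge detect A filter). Then for all $m,n\in\mathbb{N}$, it is not the case that the equation $F*X=B$ with the reflexive boundary condition, for unknown $X\in\mathbb{R}^{m\times n}$, has a unique solution for every $B\in\mathbb{R}^{m\times n}$.
   Context: For $F=[f_{ij}]\in\mathbb{R}^{3\times3}$ and $X=[x_{ij}]\in\mathbb{R}^{m\times n}$, the convolution $F*X\in\mathbb{R}^{m\times n}$ is defined by $[F*X]_{ij}=\sum_{l_1=1}^3\sum_{l_2=1}^3 f_{l_1l_2}\,x_{i-l_1+2,\,j-l_2+2}$ for $1\le i\le m$, $1\le j\le n$, where the reflexive boundary condition sets $x_{0j}=x_{1j}$, $x_{m+1,j}=x_{mj}$, $x_{i0}=x_{i1}$, $x_{i,n+1}=x_{in}$ (for all indices $i\in\{0,\dots,m+1\}$, $j\in\{0,\dots,n+1\}$, so corners are also determined, e.g. $x_{00}=x_{11}$). *)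

From HB Require Import structures.
From mathcomp Require Import all_boot all_order all_algebra.
From mathcomp Require Import reals.
Set Implicit Arguments. Unset Strict Implicit. Unset Printing Implicit Defensive.
Import Order.TTheory GRing.Theory Num.Theory.
Local Open Scope ring_scope.

(* 0-based translation of the paper's 1-based indices.
   For i : 'I_m (0-based) and filter index l in {0,1,2} (paper's l-1),
   the paper's row index i-l+2 (1-based) becomes i+1-l (0-based),
   clamped to [0, m-1] by the reflexive boundary condition.
   Truncated nat subtraction clamps below at 0; minn clamps above. *)
Definition refl_idx (m : nat) (i : 'I_m) (l : nat) : 'I_m :=
  insubd i (minn (i + 1 - l)%N m.-1).

Definition conv_refl (R : ringType) (m n : nat) (F : 'M[R]_3) (X : 'M[R]_(m, n))
  : 'M[R]_(m, n) :=
  \matrix_(i < m, j < n)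
     \sum_(l1 < 3) \sum_(l2 < 3) F l1 l2 * X (refl_idx i l1) (refl_idx j l2).

Definition edgeA (R : ringType) : 'M[R]_3 :=
  \matrix_(i < 3, j < 3)
    (if (i == 1%N :> nat) || (j == 1%N :> nat) then 0
     else if (i == j :> nat) then 1 else -1).

From HB Require Import structures.
From mathcomp Require Import all_boot all_order all_algebra.
From mathcomp Require Import reals.
Import GRing.Theory.
Local Open Scope ring_scope.

(* The reflexive boundary condition keeps constant images constant, so a filter
   whose coefficients sum to zero annihilates every constant image; the edge
   detect A filter is such a filter, hence its convolution is not injective. *)

Lemma conv_refl_const_mx (R : nzRingType) (m n : nat) (F : 'M[R]_3) (c : R) :
  conv_refl F (const_mx c : 'M_(m, n)) =
  const_mx ((\sum_(l1 < 3) \sum_(l2 < 3) F l1 l2) * c).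
Proof.
apply/matrixP => i j; rewrite !mxE mulr_suml; apply: eq_bigr => l1 _.
by rewrite mulr_suml; apply: eq_bigr => l2 _; rewrite mxE.
Qed.

Lemma edgeA_sum (R : nzRingType) : \sum_(l1 < 3) \sum_(l2 < 3) edgeA R l1 l2 = 0.
Proof.
by rewrite !big_ord_recr !big_ord0 /= !mxE /= !(add0r, addr0) subrr addNr addr0.
Qed.

Lemma conv_refl_edgeA_const_mx (R : nzRingType) (m n : nat) (c : R) :
  conv_refl (edgeA R) (const_mx c : 'M_(m, n)) = 0.
Proof. by rewrite conv_refl_const_mx edgeA_sum mul0r. Qed.

Theorem corollary9 (R : realType) (m n : nat) :
  (0 < m)%N -> (0 < n)%N ->
  ~ (forall B : 'M[R]_(m, n), exists! X : 'M[R]_(m, n), conv_refl (edgeA R) X = B).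
Proof.
move=> m_gt0 n_gt0 /(_ 0) [X [_ X_unique]].
have X_eq c : X = const_mx c by apply: X_unique; rewrite conv_refl_edgeA_const_mx.
have /matrixP/(_ (Ordinal m_gt0) (Ordinal n_gt0)) := etrans (esym (X_eq 0)) (X_eq 1).
by rewrite !mxE => /eqP; rewrite eq_sym oner_eq0.
Qed.
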